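(* Let $\lambda<0$, $C>0$ and $e_0>0$ be real numbers, and define for $t\ge 0$ $$\delta(t)=\Big(e_0^2 e^{\lambda t}+\frac{C^2}{\lambda^2}\Big(t^2+\frac{2t}{\lambda}+\frac{2}{\lambda^2}\big(1-e^{\lambda t}\big)\Big)\Big)^{1/2}.$$ Let $G=\frac{\sqrt{3}\,e_0|\lambda|}{C}$ and let $\alpha=1+\frac{|\lambda|G}{4}-\sqrt{1+\big(\frac{\lambda G}{4}\big)^2}$, which is the smallest positive root of $-\frac12|\lambda|G+\big(2+\frac12|\lambda|G\big)\alpha-\alpha^2=0$. Suppose $\frac{|\lambda|G}{4}<1$. Then $0<\alpha<1$, and $\delta(t)\le e_0$ for all $t\in[0,G(1-\alpha)]$.
   Context: In the paper this is applied with $\lambda=\lambda_u$, the (negative) one-sided Lipschitz constant of a vector field $f_u$ on $S=[0,1]^M$, and $C=C_u=\sup_{y\in S}L_u\|f_u(y)\|$ where $L_u$ is the Lipschitz constant of $f_u$ on $S$; then $\delta(t)$ is the error bound $\delta^u_{t,e_0}$ between the exact solution of $dy/dt=f_u(y)$ and its explicit Euler approximation $z_0+t f_u(z_0)$ with initial error $e_0=\|y_0-z_0\|$. *)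

From Stdlib Require Import Reals Lra.
Open Scope R_scope.

Definition delta (lam C e0 t : R) : R :=
  sqrt (e0 ^ 2 * exp (lam * t)
        + C ^ 2 / lam ^ 2 * (t ^ 2 + 2 * t / lam + 2 / lam ^ 2 * (1 - exp (lam * t)))).

Definition Gval (lam C e0 : R) : R := sqrt 3 * e0 * Rabs lam / C.

Definition alpha (lam C e0 : R) : R :=
  1 + Rabs lam * Gval lam C e0 / 4 - sqrt (1 + (lam * Gval lam C e0 / 4) ^ 2).

From Stdlib Require Import Reals Lra Psatz.
From Coquelicot Require Import Coquelicot.
Open Scope R_scope.

(* Write m = -lam > 0, s = m t (dimensionless time) and
   g = m G.  Since G = sqrt 3 e0 m / C we have C^2 g^2 = 3 e0^2 m^4, and
   delta(t)^2 = e0^2 (e^{-s} + (3/g^2) phi(s)),  phi(s) = s^2 - 2s + 2(1 - e^{-s}).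
   Hence delta(t) <= e0 amounts to (g^2/3) phi(s) <= 1 - e^{-s}.  The Taylor
   bounds 1 - s + s^2/2 - s^3/6 <= e^{-s} <= 1 - s + s^2/2 (s >= 0), proved by
   monotonicity, give phi(s) <= s^3/3 and 1 - e^{-s} >= s - s^2/2, so it suffices
   that s^3 <= g^2 (s - s^2/2), i.e. s^2 + (g^2/2) s - g^2 <= 0, i.e. s lies
   below the positive root g (r - g/4) of this quadratic, r = sqrt(1 + (g/4)^2).
   Finally alpha = 1 + g/4 - r, so t <= G (1 - alpha) is exactly s <= g (r - g/4),
   and 0 < alpha < 1 is just g/4 < r < 1 + g/4. *)

Lemma nonneg_derive_mono (f df : R -> R) :
  (forall x, is_derive f x (df x)) -> (forall x, 0 <= x -> 0 <= df x) ->
  forall s, 0 <= s -> f 0 <= f s.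
Proof.
  intros Hd Hpos s hs.
  destruct (MVT_gen f 0 s df) as [c [hc Hmvt]].
  - intros x _. apply Hd.
  - intros x _. apply continuity_pt_filterlim.
    apply (@ex_derive_continuous R_AbsRing R_NormedModule). eexists; apply Hd.
  - rewrite Rmin_left in hc by lra. rewrite Rmax_right in hc by lra.
    assert (0 <= df c) by (apply Hpos; lra). nra.
Qed.

Lemma exp_neg_le_taylor2 s : 0 <= s -> exp (- s) <= 1 - s + s ^ 2 / 2.
Proof.
  intros hs.
  assert (H : 1 - 0 + 0 ^ 2 / 2 - exp (- 0) <= 1 - s + s ^ 2 / 2 - exp (- s)).
  { apply (nonneg_derive_mono (fun x => 1 - x + x ^ 2 / 2 - exp (- x))
                              (fun x => -1 + x + exp (- x))); auto.
    - intro x. auto_derive; [exact I | field].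
    - intros x _. pose proof (exp_ineq1_le (- x)). lra. }
  rewrite Ropp_0, exp_0 in H. lra.
Qed.

Lemma taylor3_le_exp_neg s : 0 <= s -> 1 - s + s ^ 2 / 2 - s ^ 3 / 6 <= exp (- s).
Proof.
  intros hs.
  assert (H : exp (- 0) - 1 + 0 - 0 ^ 2 / 2 + 0 ^ 3 / 6
              <= exp (- s) - 1 + s - s ^ 2 / 2 + s ^ 3 / 6).
  { apply (nonneg_derive_mono (fun x => exp (- x) - 1 + x - x ^ 2 / 2 + x ^ 3 / 6)
                              (fun x => - exp (- x) + 1 - x + x ^ 2 / 2)); auto.
    - intro x. auto_derive; [exact I | field].
    - intros x hx. pose proof (exp_neg_le_taylor2 x hx). lra. }
  rewrite Ropp_0, exp_0 in H. lra.
Qed.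

(* The dimensionless error term: delta^2 = e0^2 (e^{-s} + (3/g^2) phi s). *)
Definition phi (s : R) : R := s ^ 2 - 2 * s + 2 * (1 - exp (- s)).

Lemma phi_le_decay g s : 0 <= s -> s ^ 3 <= g ^ 2 * (s - s ^ 2 / 2) ->
  3 * phi s <= g ^ 2 * (1 - exp (- s)).
Proof.
  intros hs hcub. unfold phi.
  pose proof (exp_neg_le_taylor2 s hs) as Hup.
  pose proof (taylor3_le_exp_neg s hs) as Hlow.
  assert (Hphi : s ^ 2 - 2 * s + 2 * (1 - exp (- s)) <= s ^ 3 / 3) by lra.
  assert (Hg : 0 <= g ^ 2) by (apply pow2_ge_0).
  assert (Hdecay : g ^ 2 * (s - s ^ 2 / 2) <= g ^ 2 * (1 - exp (- s)))
    by (apply Rmult_le_compat_l; lra).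
  lra.
Qed.

Lemma cubic_bound_below_root g s : 0 < g -> 0 <= s ->
  s <= g * (sqrt (1 + (g / 4) ^ 2) - g / 4) -> s ^ 3 <= g ^ 2 * (s - s ^ 2 / 2).
Proof.
  intros hg hs hroot.
  set (r := sqrt (1 + (g / 4) ^ 2)) in *.
  assert (hr2 : r * r = 1 + (g / 4) ^ 2) by (apply sqrt_sqrt; nra).
  assert (hr0 : 0 <= r) by apply sqrt_pos.
  assert (hsq : (s + g * g / 4) * (s + g * g / 4) <= (g * r) * (g * r))
    by (apply Rmult_le_compat; nra).
  assert (hquad : s * s + g * g * s / 2 - g * g <= 0) by nra.
  simpl. nra.
Qed.

Lemma alpha_form_bounds g : 0 < g ->
  0 < 1 + g / 4 - sqrt (1 + (g / 4) ^ 2) < 1.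
Proof.
  intros hg.
  set (r := sqrt (1 + (g / 4) ^ 2)).
  assert (hr2 : r * r = 1 + (g / 4) ^ 2) by (apply sqrt_sqrt; nra).
  assert (hr0 : 0 <= r) by apply sqrt_pos.
  split; nra.
Qed.

Section Scaling.
Variables lam C e0 : R.
Hypothesis hlam : lam < 0.
Hypothesis hC : 0 < C.
Hypothesis he0 : 0 < e0.

Let g := Rabs lam * Gval lam C e0.

Lemma g_pos : 0 < g.
Proof.
  unfold g, Gval. rewrite Rabs_left by lra.
  assert (0 < sqrt 3) by (apply sqrt_lt_R0; lra).
  apply Rmult_lt_0_compat; [lra|].
  unfold Rdiv. repeat apply Rmult_lt_0_compat; try lra. apply Rinv_0_lt_compat; lra.
Qed.

(* ... and C^2 g^2 = 3 e0^2 lam^4 is the identity that makes the error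
   term comparable with e0^2. *)
Lemma g_sq : C ^ 2 * g ^ 2 = 3 * e0 ^ 2 * lam ^ 4.
Proof.
  unfold g, Gval. rewrite Rabs_left by lra.
  assert (h3 : sqrt 3 ^ 2 = 3) by (simpl; rewrite Rmult_1_r; apply sqrt_sqrt; lra).
  field_simplify; [|lra]. rewrite h3. ring.
Qed.

Lemma alpha_eq : alpha lam C e0 = 1 + g / 4 - sqrt (1 + (g / 4) ^ 2).
Proof.
  unfold alpha, g. rewrite Rabs_left by lra.
  replace ((lam * Gval lam C e0 / 4) ^ 2) with ((- lam * Gval lam C e0 / 4) ^ 2) by field.
  reflexivity.
Qed.

Lemma delta_scaled t :
  delta lam C e0 t = sqrt (e0 ^ 2 * (exp (- (- lam * t)) + 3 / g ^ 2 * phi (- lam * t))).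
Proof.
  assert (hg2 : g ^ 2 = 3 * e0 ^ 2 * lam ^ 4 / C ^ 2).
  { apply (Rmult_eq_reg_l (C ^ 2)); [rewrite g_sq; field; lra | nra]. }
  unfold delta, phi. f_equal.
  replace (- (- lam * t)) with (lam * t) by ring.
  rewrite hg2. field. split; lra.
Qed.

End Scaling.

Theorem lemma1 (lam C e0 : R) (hlam : lam < 0) (hC : 0 < C) (he0 : 0 < e0)
  (hsmall : Rabs lam * Gval lam C e0 / 4 < 1) :
  (0 < alpha lam C e0 < 1) /\
  (forall t : R, 0 <= t <= Gval lam C e0 * (1 - alpha lam C e0) ->
     delta lam C e0 t <= e0).
Proof.
  pose proof (g_pos lam C e0 hlam hC he0) as hg.
  rewrite (alpha_eq lam C e0 hlam).
  split; [exact (alpha_form_bounds _ hg) |].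
  intros t [ht0 ht1].
  set (g := Rabs lam * Gval lam C e0) in *.
  set (s := - lam * t).
  assert (hs : 0 <= s) by (unfold s; nra).
  assert (hgG : g = - lam * Gval lam C e0) by (unfold g; rewrite Rabs_left by lra; reflexivity).
  assert (hroot : s <= g * (sqrt (1 + (g / 4) ^ 2) - g / 4)).
  { apply Rle_trans with
      (- lam * (Gval lam C e0 * (1 - (1 + g / 4 - sqrt (1 + (g / 4) ^ 2))))).
    - apply Rmult_le_compat_l; lra.
    - right. rewrite hgG. field. }
  pose proof (phi_le_decay g s hs (cubic_bound_below_root g s hg hs hroot)) as Hkey.
  rewrite (delta_scaled lam C e0 hlam hC he0 t). fold g s.
  apply Rle_trans with (sqrt (e0 ^ 2)); [| rewrite sqrt_pow2; lra].
  apply sqrt_le_1_alt.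
  assert (hg2 : 0 < g ^ 2) by (apply pow_lt; lra).
  assert (Hphi : 3 / g ^ 2 * phi s <= 1 - exp (- s)).
  { apply (Rmult_le_reg_l (g ^ 2)); [lra|].
    replace (g ^ 2 * (3 / g ^ 2 * phi s)) with (3 * phi s) by (field; lra).
    exact Hkey. }
  assert (0 <= e0 ^ 2) by (apply pow2_ge_0).
  nra.
Qed.
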